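(* Let $\tau$ be a veering triangulation of $M$ with $AB$-cycles $c_1,\dots,c_n$ of lengths $k_1,\dots,k_n$ and classes $g_i=[c_i]\in G$. Then $$\mathcal{AB}(\tilde\tau)\cong\bigoplus_{i=1}^n\frac{\mathbb{Z}[G]}{\left(1+(-1)^{k_i+1}g_i\right)},$$ where the $i$th summand's generator maps to a fixed (lifted) face of $c_i$, and consequently, up to a unit of $\mathbb{Z}[G]$, $$V^{\mathcal{AB}}_\tau=\prod_{i=1}^n\left(1+(-1)^{k_i+1}g_i\right).$$
   Context: $\tau$ is a veering triangulation of $M$ (taut ideal triangulation with cooriented faces, each tetrahedron having two bottom and two top faces, a bottom edge, a top edge and four side edges, angle sum $2\pi$ around edges, with a consistent right/left veer on edges modelled on a thickened rhombus whose side edges of positive slope are right-veering and of negative slope left-veering); $F$ its set of faces. $G=H_1(M;\mathbb{Z})/\mathrm{torsion}$ (multiplicative), $\hat M$ the cover with deck group $G$, $\tilde\tau$ the lift. For a face $f$, let $t$ be the tetrahedron having $f$ as a bottom face; $A(f)$ is the top face of $t$ meeting $f$ along the edge of $t$ having the same veer as the top edge of $t$. $A:F\to F$ is a permutation; its cycles are the $AB$-cycles; the length of a cycle is the number of faces in it; each $AB$-cycle determines a directed closed curve in $M$ (crossing its faces in order through the corresponding tetrahedra) and hence a class $[c]\in G$. Lifting to $\hat M$ and choosing lifts of faces, $A$ induces a $\mathbb{Z}[G]$-linear map $A:\mathbb{Z}[G]^F\to\mathbb{Z}[G]^F$ (a lifted face maps to the corresponding top face of the lifted tetrahedron above it). $L^{\mathcal{AB}}=I+A$,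 $\mathcal{AB}(\tilde\tau)=\mathrm{coker}(L^{\mathcal{AB}})$, and $V^{\mathcal{AB}}_\tau=\det L^{\mathcal{AB}}$. *)

From HB Require Import structures.
From mathcomp Require Import all_boot all_order all_algebra.
From mathcomp Require Import fingroup perm.
Set Implicit Arguments. Unset Strict Implicit. Unset Printing Implicit Defensive.
Import Order.TTheory GRing.Theory Num.Theory.
Local Open Scope ring_scope.

(* Faces are indexed by 'I_m.  The permutation [s] is A : F -> F, and
   [h f] is the (unit) coefficient such that the lifted face f~ is sent by A
   to h f * (chosen lift of A f), i.e. A(e_f) = h f * e_(s f) in R^F.       *)

Definition AB_A (R : comNzRingType) (m : nat) (s : {perm 'I_m}) (h : 'I_m -> R)
  : 'M[R]_m := \matrix_(i, j) (if i == s j then h j else 0).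

Definition AB_L (R : comNzRingType) (m : nat) (s : {perm 'I_m}) (h : 'I_m -> R)
  : 'M[R]_m := 1%:M + AB_A s h.

Definition cycle_class (R : comNzRingType) (m : nat) (s : {perm 'I_m})
  (h : 'I_m -> R) (f : 'I_m) : R := \prod_(x <- orbit s f) h x.

(* Congruence modulo the image of M : R^p -> R^q, i.e. equality in coker M. *)
Definition cong_mod (R : comNzRingType) (q p : nat) (M : 'M[R]_(q, p))
  (v w : 'cV[R]_q) : Prop := exists u : 'cV[R]_p, v - w = M *m u.

(* An R-module isomorphism  coker M1 -> coker M2, given by a set map
   Phi : R^q1 -> R^q2 which is well defined, R-linear, injective and
   surjective on the quotients. *)
Definition coker_iso (R : comNzRingType) (q1 p1 q2 p2 : nat)
  (M1 : 'M[R]_(q1, p1)) (M2 : 'M[R]_(q2, p2)) (Phi : 'cV[R]_q1 -> 'cV[R]_q2)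
  : Prop :=
  [/\ (forall v w, cong_mod M1 v w -> cong_mod M2 (Phi v) (Phi w)),
      (forall (a : R) v w, cong_mod M2 (Phi (a *: v + w)) (a *: Phi v + Phi w)),
      (forall v w, cong_mod M2 (Phi v) (Phi w) -> cong_mod M1 v w)
    & (forall u, exists v, cong_mod M2 (Phi v) u)].

Definition ecol (R : comNzRingType) (q : nat) (i : 'I_q) : 'cV[R]_q :=
  \col_j (if j == i then 1 else 0).

(* Faces are split into the cycles of the permutation s = A, each cycle i
   having a base face r i; a face f has coordinates (cycle_of f, position f),
   where f = s^(position f) (r (cycle_of f)).  Along a cycle, the path
   coefficient w f = (-1)^(position f) * (product of h over the faces before f)
   satisfies h f * w f = - w (s f), except when s wraps around to the base
   face, where h f * w f = (-1)^(k+1) g is the signed class of the cycle.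

   With this we build a change of basis V (unitriangular with respect to the
   position, so det V = 1), a projection X : R^F -> R^n onto the cycles and
   the inclusion Z : R^n -> R^F of the base faces, satisfying
        X Z = 1   and   L V = 1 + Z E X,   E = diag((-1)^(k_i+1) g_i).
   A general lemma about such factorizations shows that v |-> X v induces an
   isomorphism coker L ~ coker (1 + E) and, by Sylvester's determinant
   identity, that det L * det V = det (1 + E). *)

From HB Require Import structures.
From mathcomp Require Import all_boot all_order all_algebra.
From mathcomp Require Import fingroup perm.
From mathcomp Require Import ring.
Import Order.TTheory GRing.Theory Num.Theory.
Local Open Scope ring_scope.

(* A matrix is triangular with respect to a ranking of its indices when every
   nonzero off-diagonal entry M i j has rank j < rank i; its determinant is
   then the product of the diagonal, since every other permutation would
   strictly decrease the total rank. *)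
Lemma det_triangular_rank (R : comNzRingType) (m : nat) (M : 'M[R]_m)
    (rank : 'I_m -> nat) :
  (forall i j, i != j -> M i j != 0 -> (rank j < rank i)%N) ->
  \det M = \prod_i M i i.
Proof.
move=> rank_lt; rewrite /determinant (bigD1 1%g) //= [X in _ + X]big1 ?addr0.
  by rewrite odd_perm1 expr0 mul1r; apply: eq_bigr => i _; rewrite perm1.
move=> sg sg_neq1.
case: (pickP (fun i => M i (sg i) == 0)) => [i /eqP Mi0|M_sg_neq0].
  by rewrite (bigD1 i) //= Mi0 mul0r mulr0.
have rank_sg_le i : (rank (sg i) <= rank i)%N.
  have [<-//|ne] := eqVneq i (sg i).
  by apply/ltnW/rank_lt => //; rewrite M_sg_neq0.
have [j sgj_neq] : exists j, sg j != j.
  apply/existsP; apply: contraR sg_neq1; rewrite negb_exists => /forallP sg_id.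
  by apply/eqP/permP => x; rewrite perm1; apply/eqP; rewrite -[_ == _]negbK.
have : (\sum_i rank (sg i) < \sum_i rank i)%N.
  rewrite (bigD1 j) //= [X in (_ < X)%N](bigD1 j) //= -addSn leq_add //.
    by apply: rank_lt; rewrite ?M_sg_neq0 // eq_sym.
  by apply: leq_sum => i _; apply: rank_sg_le.
by rewrite [X in (_ < X)%N](reindex_inj (@perm_inj _ sg)) ltnn.
Qed.

(* Sylvester's determinant identity det(1 + AB) = det(1 + BA), obtained by
   factoring one block matrix in two block-triangular ways. *)
Lemma det_sylvester (R : comNzRingType) (m n : nat)
    (A : 'M[R]_(m, n)) (B : 'M[R]_(n, m)) :
  \det (1%:M + A *m B) = \det (1%:M + B *m A).
Proof.
have factor_upper : block_mx 1%:M (- A) B 1%:M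
    = block_mx (1%:M + A *m B) (- A) 0 1%:M *m block_mx 1%:M 0 B 1%:M.
  by rewrite mulmx_block !mulmx1 !mul1mx !mul0mx !mulmx0 !add0r mulNmx addrK.
have factor_lower : block_mx 1%:M (- A) B 1%:M
    = block_mx 1%:M 0 B 1%:M *m block_mx 1%:M (- A) 0 (1%:M + B *m A).
  by rewrite mulmx_block !mulmx1 !mul1mx !mul0mx !addr0 mulmxN addrCA addNr addr0.
have := congr1 determinant factor_lower.
rewrite {1}factor_upper !det_mulmx det_ublock det_lblock !det1 !mulr1 !mul1r => ->.
by rewrite (det_ublock (1%:M : 'M_m)) det1 mul1r.
Qed.

Section CokernelOfFactorization.
Set Implicit Arguments. Unset Strict Implicit.
Variables (R : comUnitRingType) (m n : nat).
Variables (L V : 'M[R]_m) (X : 'M[R]_(n, m)) (Z : 'M[R]_(m, n)) (E : 'M[R]_n).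
Hypotheses (V_unit : V \in unitmx) (XZ : X *m Z = 1%:M)
  (LV : L *m V = 1%:M + Z *m E *m X).

Let M := 1%:M + Z *m E *m X.
Let D := 1%:M + E.

Lemma factorization_intertwine_left : X *m M = D *m X.
Proof. by rewrite mulmxDr mulmx1 !mulmxA XZ mul1mx mulmxDl mul1mx. Qed.

Lemma factorization_intertwine_right : M *m Z = Z *m D.
Proof. by rewrite mulmxDl mul1mx -!mulmxA XZ mulmx1 mulmxDr mulmx1. Qed.

Lemma factorization_fixes_kernel : M *m (Z *m X - 1%:M) = Z *m X - 1%:M.
Proof.
rewrite mulmxBr mulmx1 mulmxA factorization_intertwine_right mulmxDr mulmx1.
by rewrite mulmxDl opprD addrACA subrr addr0.
Qed.

(* X respects the relations since X L = D X V^-1; it reflects them, a relation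
   X (v - w) = D u lifting to v - w = L (V Z u - V (Z X - 1)(v - w)); and it is
   onto since X Z = 1. *)
Lemma coker_iso_of_factorization : coker_iso L D (mulmx X).
Proof.
split.
- have XL : X *m L = D *m X *m invmx V.
    rewrite -[X *m L]mulmx1 -(mulmxV V_unit) !mulmxA -(mulmxA X) LV.
    by rewrite factorization_intertwine_left.
  by move=> v w [u vw]; exists (X *m invmx V *m u); rewrite -mulmxBr vw
    mulmxA XL !mulmxA.
- by move=> a v w; exists 0; rewrite mulmx0 mulmxDr scalemxAr subrr.
- move=> v w [u Xvw]; exists (V *m Z *m u - V *m (Z *m X - 1%:M) *m (v - w)).
  rewrite mulmxBr !mulmxA LV -/M factorization_intertwine_right.
  rewrite factorization_fixes_kernel -mulmxA -Xvw -mulmxBr.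
  by rewrite mulmxBl mul1mx mulmxA opprB [RHS]addrC subrK.
- by move=> u; exists (Z *m u); exists 0; rewrite mulmxA XZ mul1mx subrr mulmx0.
Qed.

(* Sylvester's identity reduces det M to det (1 + E X Z) = det D. *)
Lemma det_of_factorization : \det L * \det V = \det D.
Proof. by rewrite -det_mulmx LV -mulmxA det_sylvester -mulmxA XZ mulmx1. Qed.

End CokernelOfFactorization.

Section CycleCoordinates.
Set Implicit Arguments. Unset Strict Implicit.
Variables (T : finType) (s : {perm T}) (n : nat) (r : 'I_n -> T).
Hypothesis r_transversal : forall f : T, exists! i : 'I_n, fconnect s (r i) f.

Lemma cycle_of_exists (f : T) : exists i, fconnect s (r i) f.
Proof. by have [i [fi _]] := r_transversal f; exists i. Qed.

Definition cycle_of (f : T) : 'I_n := xchoose (cycle_of_exists f).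
Definition position (f : T) : nat := findex s (r (cycle_of f)) f.
Local Notation len i := (fingraph.order s (r i)).

Lemma cycle_ofP f : fconnect s (r (cycle_of f)) f.
Proof. exact: (xchooseP (cycle_of_exists f)). Qed.

Lemma cycle_of_unique f i : fconnect s (r i) f -> cycle_of f = i.
Proof.
move=> fi; have [i0 [_ uniq_i0]] := r_transversal f.
by rewrite -(uniq_i0 i fi) -(uniq_i0 _ (cycle_ofP f)).
Qed.

Lemma cycle_of_r i : cycle_of (r i) = i.
Proof. exact/cycle_of_unique/connect0. Qed.

Lemma cycle_of_s f : cycle_of (s f) = cycle_of f.
Proof. exact/cycle_of_unique/(connect_trans (cycle_ofP f))/fconnect1. Qed.

Lemma r_inj : injective r.
Proof. by move=> i j rij; rewrite -(cycle_of_r i) rij cycle_of_r. Qed.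

Lemma position_lt f : (position f < len (cycle_of f))%N.
Proof. exact/findex_max/cycle_ofP. Qed.

Lemma iter_position f : iter (position f) s (r (cycle_of f)) = f.
Proof. exact/iter_findex/cycle_ofP. Qed.

Lemma position_r i : position (r i) = 0%N.
Proof. by rewrite /position cycle_of_r findex0. Qed.

Lemma coordinates_inj f g :
  cycle_of f = cycle_of g -> position f = position g -> f = g.
Proof.
by move=> cfg pfg; rewrite -(iter_position f) -(iter_position g) cfg pfg.
Qed.

Lemma position0 f : position f = 0%N -> f = r (cycle_of f).
Proof.
by move=> pf0; apply: coordinates_inj; rewrite ?cycle_of_r ?position_r.
Qed.

Lemma s_as_iter f : s f = iter (position f).+1 s (r (cycle_of f)).
Proof. by rewrite iterS iter_position. Qed.

Lemma position_s f :
  ((position f).+1 < len (cycle_of f))%N -> position (s f) = (position f).+1.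
Proof. by move=> lt_len; rewrite /position cycle_of_s s_as_iter findex_iter. Qed.

Lemma s_wrap f : (position f).+1 = len (cycle_of f) -> s f = r (cycle_of f).
Proof.
by move=> eq_len; rewrite s_as_iter eq_len iter_order //; apply: perm_inj.
Qed.

End CycleCoordinates.

Lemma AB_L_mulmx_row (R : comNzRingType) (m p : nat) (s : {perm 'I_m})
    (h : 'I_m -> R) (N : 'M[R]_(m, p)) f g :
  (AB_L s h *m N) (s f) g = N (s f) g + h f * N f g.
Proof.
rewrite /AB_L mulmxDl mul1mx mxE; congr (_ + _).
rewrite mxE (bigD1 f) //= big1 ?addr0 => [|j /negPf nj].
  by rewrite !mxE eqxx.
by rewrite !mxE (inj_eq perm_inj) eq_sym nj mul0r.
Qed.

Lemma big_traject (R : Type) (idx : R) (op : Monoid.law idx) (T : Type)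
    (f : T -> T) (F : T -> R) (x : T) (k : nat) :
  \big[op/idx]_(y <- traject f x k) F y = \big[op/idx]_(w < k) F (iter w f x).
Proof.
elim: k => [|k IHk]; first by rewrite big_nil big_ord0.
by rewrite trajectSr -cats1 big_cat big_seq1 IHk big_ord_recr.
Qed.

(* The matrices of the factorization of L^{AB} for a veering triangulation:
   s = A, h the unit coefficients of the lifts, r a choice of one face in
   each AB-cycle. *)
Section ABMatrices.
Set Implicit Arguments. Unset Strict Implicit.
Variables (R : comUnitRingType) (m : nat) (s : {perm 'I_m}) (h : 'I_m -> R).
Hypothesis h_unit : forall f, h f \is a GRing.unit.
Variables (n : nat) (r : 'I_n -> 'I_m).
Hypothesis r_transversal : forall f : 'I_m, exists! i : 'I_n, fconnect s (r i) f.

Local Notation cyc := (@cycle_of _ s n r r_transversal).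
Local Notation pos := (@position _ s n r r_transversal).
Local Notation len i := (fingraph.order s (r i)).

Definition cycle_sign (i : 'I_n) : R :=
  (-1) ^+ (len i).+1 * cycle_class s h (r i).

(* The coefficient of f in the image of the base face of its cycle under
   (-A)^(position f). *)
Definition path_coef (f : 'I_m) : R :=
  (-1) ^+ pos f * \prod_(w < pos f) h (iter w s (r (cyc f))).

Lemma path_coef_unit f : path_coef f \is a GRing.unit.
Proof.
by rewrite unitrM unitrX ?unitrN1 //; apply: unitr_prod => w _; apply: h_unit.
Qed.

Lemma path_coef_r i : path_coef (r i) = 1.
Proof. by rewrite /path_coef position_r expr0 big_ord0 mulr1. Qed.

Lemma path_coef_s f :
  ((pos f).+1 < len (cyc f))%N -> h f * path_coef f = - path_coef (s f).
Proof.
move=> lt_len; rewrite /path_coef position_s // cycle_of_s big_ord_recr /=.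
by rewrite iter_position exprS; ring.
Qed.

Lemma path_coef_wrap f :
  (pos f).+1 = len (cyc f) -> h f * path_coef f = cycle_sign (cyc f).
Proof.
move=> eq_len; rewrite /cycle_sign /cycle_class /orbit -eq_len.
rewrite big_traject big_ord_recr /= iter_position /path_coef !exprS; ring.
Qed.

Definition proj_mx : 'M[R]_(n, m) :=
  \matrix_(i, f) (if cyc f == i then (path_coef f)^-1 else 0).
Definition base_mx : 'M[R]_(m, n) := \matrix_(f, i) (if f == r i then 1 else 0).
Definition sign_mx : 'M[R]_n := diag_mx (\row_i cycle_sign i).
Definition change_mx : 'M[R]_m := \matrix_(f, g)
  (if (cyc f == cyc g) && (pos g <= pos f)%N then path_coef f / path_coef g
   else 0).

Lemma proj_mx_base i j : proj_mx j (r i) = (i == j)%:R.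
Proof. by rewrite mxE cycle_of_r path_coef_r invr1; case: eqP. Qed.

Lemma proj_base : proj_mx *m base_mx = 1%:M.
Proof.
apply/matrixP => i j; rewrite !mxE (bigD1 (r j)) //= big1 ?addr0.
  by rewrite proj_mx_base mxE eqxx mulr1 eq_sym.
by move=> f /negPf nf; rewrite !mxE nf mulr0.
Qed.

Lemma proj_ecol i : proj_mx *m ecol R (r i) = ecol R i.
Proof.
apply/matrixP => j z; rewrite !mxE (bigD1 (r i)) //= big1 ?addr0.
  by rewrite proj_mx_base mxE eqxx mulr1 eq_sym; case: (j == i).
by move=> f /negPf nf; rewrite !mxE nf mulr0.
Qed.

Lemma base_sign_proj f g : (base_mx *m sign_mx *m proj_mx) f g =
  if f == r (cyc g) then cycle_sign (cyc g) / path_coef g else 0.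
Proof.
rewrite mul_mx_diag !mxE (bigD1 (cyc g)) //= big1 ?addr0.
  by rewrite !mxE eqxx; case: (f == r (cyc g)); rewrite ?mul1r ?mul0r.
by move=> i /negPf ni; rewrite !mxE (eq_sym (cyc g)) ni mulr0.
Qed.

(* Rows of L V at a face s f that is not a base face: they telescope. *)
Lemma change_mx_succ_row f g : ((pos f).+1 < len (cyc f))%N ->
  change_mx (s f) g + h f * change_mx f g = (s f == g)%:R.
Proof.
move=> lt_len; rewrite !mxE cycle_of_s position_s //.
have [cfg|ncfg] := eqVneq (cyc f) (cyc g); last first.
  rewrite /= mulr0 addr0; case: eqP => // sfg.
  by case/eqP: ncfg; rewrite -sfg cycle_of_s.
have sfgE : (s f == g) = (pos g == (pos f).+1).
  apply/eqP/eqP => [<-|pg]; first exact: position_s.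
  by apply: coordinates_inj; rewrite ?cycle_of_s ?position_s.
rewrite /= sfgE; case: ltngtP => pg.
- by rewrite -ltnS pg mulrA path_coef_s // mulNr addrN.
- by rewrite leqNgt (ltn_trans (ltnSn _) pg) mulr0 addr0.
- have gE : g = s f by apply/esym/eqP; rewrite sfgE pg.
  by rewrite pg ltnn mulr0 addr0 gE divrr ?path_coef_unit.
Qed.

Lemma change_mx_wrap_row f g : (pos f).+1 = len (cyc f) ->
  change_mx (s f) g + h f * change_mx f g =
  (r (cyc f) == g)%:R +
  (if cyc f == cyc g then cycle_sign (cyc f) / path_coef g else 0).
Proof.
move=> eq_len; rewrite !mxE (s_wrap eq_len) cycle_of_r position_r path_coef_r.
have [cfg|ncfg] := eqVneq (cyc f) (cyc g); last first.
  rewrite /= mulr0 !addr0; case: eqP => // rg.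
  by case/eqP: ncfg; rewrite -rg cycle_of_r.
have -> : (pos g <= pos f)%N by rewrite -ltnS eq_len cfg position_lt.
have rgE : (r (cyc f) == g) = (pos g == 0%N).
  by apply/eqP/eqP => [<-|/position0 ->]; rewrite ?position_r ?cfg.
rewrite /= mulrA path_coef_wrap // leqn0 -rgE.
by case: eqP => [<-|_]; rewrite ?path_coef_r ?divr1.
Qed.

Lemma AB_L_change :
  AB_L s h *m change_mx = 1%:M + base_mx *m sign_mx *m proj_mx.
Proof.
apply/matrixP => f0 g; have [f ->] : exists f, f0 = s f.
  by exists ((s^-1)%g f0); rewrite permKV.
rewrite AB_L_mulmx_row [RHS]mxE base_sign_proj [in RHS]mxE.
have := position_lt r_transversal f.
rewrite leq_eqVlt => /orP[/eqP eq_len|lt_len].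
- rewrite change_mx_wrap_row // (s_wrap eq_len) (inj_eq (r_inj r_transversal)).
  by case: (cyc f =P cyc g) => [->|].
- have -> : (s f == r (cyc g)) = false.
    by apply/eqP => sfr; have := position_s lt_len; rewrite sfr position_r.
  by rewrite change_mx_succ_row // addr0.
Qed.

(* V is unitriangular with respect to the position. *)
Lemma det_change : \det change_mx = 1.
Proof.
rewrite (@det_triangular_rank _ _ _ pos) => [|f g nfg].
  by apply: big1 => f _; rewrite mxE eqxx leqnn divrr ?path_coef_unit.
rewrite mxE; case: ifP => [/andP[/eqP cfg pgf] _|_]; last by rewrite eqxx.
rewrite ltn_neqAle pgf andbT; apply: contraNneq nfg => pfg.
by apply/eqP/coordinates_inj.
Qed.

End ABMatrices.

Theorem mainTheorem15 (R : comUnitRingType) (m : nat) (s : {perm 'I_m})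
    (h : 'I_m -> R) (hunit : forall f, h f \is a GRing.unit)
    (n : nat) (r : 'I_n -> 'I_m)
    (hr : forall f : 'I_m, exists! i : 'I_n, fconnect s (r i) f) :
  let d := fun i : 'I_n =>
    1 + (-1) ^+ (fingraph.order s (r i)).+1 * cycle_class s h (r i) in
  let D : 'M[R]_n := diag_mx (\row_i d i) in
  (exists Phi : 'cV[R]_m -> 'cV[R]_n,
      coker_iso (AB_L s h) D Phi /\
      forall i : 'I_n, cong_mod D (Phi (ecol R (r i))) (ecol R i))
  /\ (exists u : R, u \is a GRing.unit /\ \det (AB_L s h) = u * \prod_i d i).
Proof.
move=> d D.
pose X := proj_mx h hr; pose V := change_mx h hr.
have D_sign : D = 1%:M + sign_mx s h r.
  by apply/matrixP => i j; rewrite !mxE; case: (i == j); rewrite ?addr0.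
have V_unit : V \in unitmx by rewrite unitmxE det_change // unitr1.
have LV := AB_L_change hunit hr; have XZ := proj_base h hr.
split.
  exists (mulmx X); split.
    by rewrite D_sign; exact: coker_iso_of_factorization V_unit XZ LV.
  by move=> i; rewrite proj_ecol; exists 0; rewrite mulmx0 subrr.
exists 1; split; first exact: unitr1.
have := det_of_factorization XZ LV; rewrite det_change // mulr1 mul1r => ->.
by rewrite -D_sign det_diag; apply: eq_bigr => i _; rewrite mxE.
Qed.
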